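(* The systems ${\bf Km}$ and ${\bf Km}_\circ$ coincide: for every $\Gamma\cup\{\alpha\}\subseteq For$, $\Gamma\vdash_{\bf Km}\alpha$ iff $\Gamma\vdash_{{\bf Km}_\circ}\alpha$.
   Context: Formulas are built from a denumerable set of propositional variables by the unary connectives $\neg$, $\Box$ and the binary connective $\to$; $For$ is the set of all formulas. Abbreviations: $\Diamond\alpha:=\neg\Box\neg\alpha$, $\alpha\vee\beta:=\neg\alpha\to\beta$, $\alpha\wedge\beta:=\neg(\alpha\to\neg\beta)$, $\circ\alpha:=\Box\alpha\to\Diamond\alpha$, $\bullet\alpha:=\neg\circ\alpha$. All Hilbert calculi below have as axioms all instances (over $For$) of the axiom schemas of a standard Hilbert calculus for classical propositional logic in the signature $\{\neg,\to\}$, plus the listed modal schemas, with modus ponens as the only rule; $\Gamma\vdash_{\bf L}\alpha$ means there is a derivation of $\alpha$ from $\Gamma$ in ${\bf L}$. Common schemas: (M1) $\neg\Diamond\alpha\to\Box(\alpha\to\beta)$; (M2) $\Box\beta\to\Box(\alpha\to\beta)$; (DN1) $\Box\alpha\to\Box\neg\neg\alpha$; (DN2) $\Box\neg\neg\alpha\to\Box\alpha$. ${\bf Km}$: (M1), (M2), (DN1), (DN2) and (K') $\Diamond\alpha\to(\Box(\alpha\to\beta)\to(\Box\alpha\to\Box\beta))$; (K1') $\Diamond\neg\beta\to(\Box(\alpha\to\beta)\to(\Diamond\alpha\to\Diamond\beta))$; (K2') $\Diamond\alpha\to(\Diamond(\alpha\to\beta)\to(\Box\alpha\to\Diamond\beta))$;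 (M3') $(\Diamond\alpha\vee\Diamond\neg\alpha)\to(\Diamond\beta\to\Diamond(\alpha\to\beta))$; (M4') $\Diamond\neg\beta\to(\Diamond\neg\alpha\to\Diamond(\alpha\to\beta))$; (I1) $(\Box\alpha\wedge\Box\neg\alpha)\to(\Box(\alpha\to\beta)\wedge\Box\neg(\alpha\to\beta))$; (I2) $(\Box\beta\wedge\Box\neg\beta)\to(\Box(\alpha\to\beta)\wedge\Box\neg(\alpha\to\beta))$. ${\bf Km}_\circ$: (M1), (M2), (DN1), (DN2) and (K'') $\circ\alpha\to(\Box(\alpha\to\beta)\to(\Box\alpha\to\Box\beta))$; (K1'') $\circ\beta\to(\Box(\alpha\to\beta)\to(\Diamond\alpha\to\Diamond\beta))$; (K2'') $\circ\alpha\to(\Diamond(\alpha\to\beta)\to(\Box\alpha\to\Diamond\beta))$; (M3'') $\circ\alpha\to(\Diamond\beta\to\Diamond(\alpha\to\beta))$; (M4'') $\circ\beta\to(\Diamond\neg\alpha\to\Diamond(\alpha\to\beta))$; (I1') $\bullet\alpha\to\bullet(\alpha\to\beta)$; (I2') $\bullet\beta\to\bullet(\alpha\to\beta)$. *)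

Inductive For : Type :=
| Var : nat -> For
| Neg : For -> For
| Box : For -> For
| Imp : For -> For -> For.

Definition Dia (a : For) : For := Neg (Box (Neg a)).
Definition Or (a b : For) : For := Imp (Neg a) b.
Definition And (a b : For) : For := Neg (Imp a (Neg b)).
Definition Circ (a : For) : For := Imp (Box a) (Dia a).
Definition Bullet (a : For) : For := Neg (Circ a).

(* Standard Hilbert calculus for classical propositional logic in {¬,→}
   (Łukasiewicz's axioms), instantiated over all formulas. *)
Inductive CPL_ax : For -> Prop :=
| Ax1 a b : CPL_ax (Imp a (Imp b a))
| Ax2 a b c : CPL_ax (Imp (Imp a (Imp b c)) (Imp (Imp a b) (Imp a c)))
| Ax3 a b : CPL_ax (Imp (Imp (Neg a) (Neg b)) (Imp b a)).

Inductive Common_ax : For -> Prop :=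
| M1 a b : Common_ax (Imp (Neg (Dia a)) (Box (Imp a b)))
| M2 a b : Common_ax (Imp (Box b) (Box (Imp a b)))
| DN1 a : Common_ax (Imp (Box a) (Box (Neg (Neg a))))
| DN2 a : Common_ax (Imp (Box (Neg (Neg a))) (Box a)).

Inductive Km_ax : For -> Prop :=
| Km_K a b : Km_ax (Imp (Dia a) (Imp (Box (Imp a b)) (Imp (Box a) (Box b))))
| Km_K1 a b : Km_ax (Imp (Dia (Neg b)) (Imp (Box (Imp a b)) (Imp (Dia a) (Dia b))))
| Km_K2 a b : Km_ax (Imp (Dia a) (Imp (Dia (Imp a b)) (Imp (Box a) (Dia b))))
| Km_M3 a b : Km_ax (Imp (Or (Dia a) (Dia (Neg a))) (Imp (Dia b) (Dia (Imp a b))))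
| Km_M4 a b : Km_ax (Imp (Dia (Neg b)) (Imp (Dia (Neg a)) (Dia (Imp a b))))
| Km_I1 a b : Km_ax (Imp (And (Box a) (Box (Neg a)))
                          (And (Box (Imp a b)) (Box (Neg (Imp a b)))))
| Km_I2 a b : Km_ax (Imp (And (Box b) (Box (Neg b)))
                          (And (Box (Imp a b)) (Box (Neg (Imp a b))))).

Inductive Kmc_ax : For -> Prop :=
| Kmc_K a b : Kmc_ax (Imp (Circ a) (Imp (Box (Imp a b)) (Imp (Box a) (Box b))))
| Kmc_K1 a b : Kmc_ax (Imp (Circ b) (Imp (Box (Imp a b)) (Imp (Dia a) (Dia b))))
| Kmc_K2 a b : Kmc_ax (Imp (Circ a) (Imp (Dia (Imp a b)) (Imp (Box a) (Dia b))))
| Kmc_M3 a b : Kmc_ax (Imp (Circ a) (Imp (Dia b) (Dia (Imp a b))))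
| Kmc_M4 a b : Kmc_ax (Imp (Circ b) (Imp (Dia (Neg a)) (Dia (Imp a b))))
| Kmc_I1 a b : Kmc_ax (Imp (Bullet a) (Bullet (Imp a b)))
| Kmc_I2 a b : Kmc_ax (Imp (Bullet b) (Bullet (Imp a b))).

Inductive derives (Ax : For -> Prop) (Gamma : For -> Prop) : For -> Prop :=
| d_hyp a : Gamma a -> derives Ax Gamma a
| d_ax a : Ax a -> derives Ax Gamma a
| d_mp a b : derives Ax Gamma (Imp a b) -> derives Ax Gamma a -> derives Ax Gamma b.

Definition Km_axioms (a : For) : Prop := CPL_ax a \/ Common_ax a \/ Km_ax a.
Definition Kmc_axioms (a : For) : Prop := CPL_ax a \/ Common_ax a \/ Kmc_ax a.

Definition Km_derives (Gamma : For -> Prop) (a : For) : Prop := derives Km_axioms Gamma a.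
Definition Kmc_derives (Gamma : For -> Prop) (a : For) : Prop := derives Kmc_axioms Gamma a.

(* Classically [◇α] yields [∘α], and [∘α] together with [□α] yields [◇α];
   (DN1) and (DN2) make [◇¬β] equivalent to [¬□β], which also yields [∘β].
   So each schema of one system follows from its counterpart in the other,
   splitting on [□β] where a Km∘ side condition [∘β] must be turned into a Km
   one: if [□β], then [∘β] already gives [◇β]; if not, [◇¬β] holds and the
   Km schema applies. *)


Lemma derives_of_derivable_axioms (Ax Ax' : For -> Prop) (G : For -> Prop) (a : For) :
  (forall b, Ax b -> derives Ax' G b) -> derives Ax G a -> derives Ax' G a.
Proof.
  intros Hax Ha; induction Ha as [a Ha | a Ha | a b _ IHab _ IHa].
  - now apply d_hyp.
  - now apply Hax.
  - exact (d_mp _ _ _ _ IHab IHa).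
Qed.

Definition extend (G : For -> Prop) (a : For) : For -> Prop := fun x => G x \/ x = a.

Section Hilbert.

Variable Ax : For -> Prop.
Hypothesis CPL_in : forall f, CPL_ax f -> Ax f.

Local Notation D := (derives Ax).

Ltac hyp := apply d_hyp; unfold extend; tauto.

Lemma mp {G a b} : D G (Imp a b) -> D G a -> D G b.
Proof. apply d_mp. Qed.

Lemma mp2 {G a b c} : D G (Imp a (Imp b c)) -> D G a -> D G b -> D G c.
Proof. intros Habc Ha Hb; exact (mp (mp Habc Ha) Hb). Qed.

Lemma mp3 {G a b c d} :
  D G (Imp a (Imp b (Imp c d))) -> D G a -> D G b -> D G c -> D G d.
Proof. intros Habcd Ha Hb Hc; exact (mp (mp2 Habcd Ha Hb) Hc). Qed.

Lemma CPL_axiom {G f} : CPL_ax f -> D G f.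
Proof. intros Hf; exact (d_ax _ _ _ (CPL_in _ Hf)). Qed.

Lemma derives_imp_const {G a b} : D G b -> D G (Imp a b).
Proof. exact (mp (CPL_axiom (Ax1 b a))). Qed.

Lemma derives_imp_refl {G a} : D G (Imp a a).
Proof.
  exact (mp2 (CPL_axiom (Ax2 a (Imp a a) a)) (CPL_axiom (Ax1 a (Imp a a)))
             (CPL_axiom (Ax1 a a))).
Qed.

Lemma deduction {G a b} : D (extend G a) b -> D G (Imp a b).
Proof.
  induction 1 as [b [Hb | ->] | b Hb | b c _ IHbc _ IHb].
  - exact (derives_imp_const (d_hyp _ _ _ Hb)).
  - exact derives_imp_refl.
  - exact (derives_imp_const (d_ax _ _ _ Hb)).
  - exact (mp2 (CPL_axiom (Ax2 a b c)) IHbc IHb).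
Qed.

Lemma derives_extend {G a b} : D G a -> D (extend G b) a.
Proof.
  induction 1 as [a Ha | a Ha | a c _ IHac _ IHa].
  - apply d_hyp; now left.
  - now apply d_ax.
  - exact (mp IHac IHa).
Qed.

Lemma derives_imp2 {G a b c} :
  (forall G', D G' a -> D G' b -> D G' c) -> D G (Imp a (Imp b c)).
Proof. intros Hrule; do 2 apply deduction; apply Hrule; hyp. Qed.

Lemma derives_imp3 {G a b c d} :
  (forall G', D G' a -> D G' b -> D G' c -> D G' d) -> D G (Imp a (Imp b (Imp c d))).
Proof. intros Hrule; do 3 apply deduction; apply Hrule; hyp. Qed.

Lemma ex_falso {G a b} : D G (Neg a) -> D G a -> D G b.
Proof.
  intros Hna Ha.
  exact (mp2 (CPL_axiom (Ax3 b a)) (derives_imp_const Hna) Ha).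
Qed.

Lemma neg_neg_elim {G a} : D G (Neg (Neg a)) -> D G a.
Proof.
  intros Hnna.
  refine (mp2 (CPL_axiom (Ax3 a (Neg (Neg a)))) _ Hnna).
  exact (mp (CPL_axiom (Ax3 (Neg (Neg (Neg a))) (Neg a))) (derives_imp_const Hnna)).
Qed.

Lemma by_contradiction {G c} x :
  D (extend G (Neg c)) x -> D (extend G (Neg c)) (Neg x) -> D G c.
Proof.
  intros Hx Hnx.
  assert (Hcontra : D G (Imp (Neg c) (Neg (Imp c c)))) by exact (deduction (ex_falso Hnx Hx)).
  exact (mp2 (CPL_axiom (Ax3 c (Imp c c))) Hcontra derives_imp_refl).
Qed.

Lemma modus_tollens {G a b} : D G (Imp a b) -> D G (Neg b) -> D G (Neg a).
Proof.
  intros Hab Hnb; apply (by_contradiction b).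
  - apply (mp (derives_extend Hab)), neg_neg_elim; hyp.
  - exact (derives_extend Hnb).
Qed.

Lemma by_cases {G c} a : D (extend G a) c -> D (extend G (Neg a)) c -> D G c.
Proof.
  intros Hac Hnac; apply deduction in Hac; apply deduction in Hnac.
  apply (by_contradiction c); [| hyp].
  apply (mp (derives_extend Hnac)), (modus_tollens (derives_extend Hac)); hyp.
Qed.

Lemma circ_of_not_box {G a} : D G (Neg (Box a)) -> D G (Circ a).
Proof.
  intros Hnbox; apply deduction, (ex_falso (derives_extend Hnbox)); hyp.
Qed.

Hypothesis Common_in : forall f, Common_ax f -> Ax f.

Lemma Common_axiom {G f} : Common_ax f -> D G f.
Proof. intros Hf; exact (d_ax _ _ _ (Common_in _ Hf)). Qed.

Lemma not_box_of_dia_neg {G a} : D G (Dia (Neg a)) -> D G (Neg (Box a)).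
Proof. exact (modus_tollens (Common_axiom (DN1 a))). Qed.

Lemma dia_neg_of_not_box {G a} : D G (Neg (Box a)) -> D G (Dia (Neg a)).
Proof. exact (modus_tollens (Common_axiom (DN2 a))). Qed.

Lemma circ_of_dia_neg {G a} : D G (Dia (Neg a)) -> D G (Circ a).
Proof. intros Hdna; exact (circ_of_not_box (not_box_of_dia_neg Hdna)). Qed.

Lemma circ_of_dia_or_dia_neg {G a} : D G (Or (Dia a) (Dia (Neg a))) -> D G (Circ a).
Proof.
  intros Hor; apply (by_cases (Dia a)).
  - apply derives_imp_const; hyp.
  - apply circ_of_dia_neg, (mp (derives_extend Hor)); hyp.
Qed.

Lemma dia_or_dia_neg_of_circ {G a} : D G (Circ a) -> D G (Or (Dia a) (Dia (Neg a))).
Proof.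
  intros Hcirc; apply deduction, dia_neg_of_not_box.
  apply (modus_tollens (derives_extend Hcirc)); hyp.
Qed.

Section KmcInKm.

Hypothesis Km_in : forall f, Km_ax f -> Ax f.

Lemma Km_axiom {G f} : Km_ax f -> D G f.
Proof. intros Hf; exact (d_ax _ _ _ (Km_in _ Hf)). Qed.

Lemma rule_K'' G a b :
  D G (Circ a) -> D G (Box (Imp a b)) -> D G (Box a) -> D G (Box b).
Proof. intros Hc Hab Ha; exact (mp3 (Km_axiom (Km_K a b)) (mp Hc Ha) Hab Ha). Qed.

Lemma rule_K1'' G a b :
  D G (Circ b) -> D G (Box (Imp a b)) -> D G (Dia a) -> D G (Dia b).
Proof.
  intros Hc Hab Ha; apply (by_cases (Box b)).
  - apply (mp (derives_extend Hc)); hyp.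
  - apply (mp3 (Km_axiom (Km_K1 a b))).
    + apply dia_neg_of_not_box; hyp.
    + exact (derives_extend Hab).
    + exact (derives_extend Ha).
Qed.

Lemma rule_K2'' G a b :
  D G (Circ a) -> D G (Dia (Imp a b)) -> D G (Box a) -> D G (Dia b).
Proof. intros Hc Hab Ha; exact (mp3 (Km_axiom (Km_K2 a b)) (mp Hc Ha) Hab Ha). Qed.

Lemma rule_M3'' G a b : D G (Circ a) -> D G (Dia b) -> D G (Dia (Imp a b)).
Proof.
  intros Hc Hb; exact (mp2 (Km_axiom (Km_M3 a b)) (dia_or_dia_neg_of_circ Hc) Hb).
Qed.

Lemma rule_M4'' G a b : D G (Circ b) -> D G (Dia (Neg a)) -> D G (Dia (Imp a b)).
Proof.
  intros Hc Hna; apply (by_cases (Box b)).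
  - apply (mp2 (Km_axiom (Km_M3 a b))).
    + exact (derives_imp_const (derives_extend Hna)).
    + apply (mp (derives_extend Hc)); hyp.
  - apply (mp2 (Km_axiom (Km_M4 a b))).
    + apply dia_neg_of_not_box; hyp.
    + exact (derives_extend Hna).
Qed.

(* [∙α] unfolds to [□α ∧ □¬α], so (I1'), (I2') are literally (I1), (I2). *)
Lemma Kmc_ax_derivable_in_Km G f : Kmc_ax f -> D G f.
Proof.
  destruct 1 as [a b | a b | a b | a b | a b | a b | a b].
  - exact (derives_imp3 (fun G' => rule_K'' G' a b)).
  - exact (derives_imp3 (fun G' => rule_K1'' G' a b)).
  - exact (derives_imp3 (fun G' => rule_K2'' G' a b)).
  - exact (derives_imp2 (fun G' => rule_M3'' G' a b)).
  - exact (derives_imp2 (fun G' => rule_M4'' G' a b)).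
  - exact (Km_axiom (Km_I1 a b)).
  - exact (Km_axiom (Km_I2 a b)).
Qed.

End KmcInKm.

Section KmInKmc.

Hypothesis Kmc_in : forall f, Kmc_ax f -> Ax f.

Lemma Kmc_axiom {G f} : Kmc_ax f -> D G f.
Proof. intros Hf; exact (d_ax _ _ _ (Kmc_in _ Hf)). Qed.

Lemma rule_K' G a b :
  D G (Dia a) -> D G (Box (Imp a b)) -> D G (Box a) -> D G (Box b).
Proof.
  intros Hd Hab Ha; exact (mp3 (Kmc_axiom (Kmc_K a b)) (derives_imp_const Hd) Hab Ha).
Qed.

Lemma rule_K1' G a b :
  D G (Dia (Neg b)) -> D G (Box (Imp a b)) -> D G (Dia a) -> D G (Dia b).
Proof.
  intros Hnb Hab Ha; exact (mp3 (Kmc_axiom (Kmc_K1 a b)) (circ_of_dia_neg Hnb) Hab Ha).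
Qed.

Lemma rule_K2' G a b :
  D G (Dia a) -> D G (Dia (Imp a b)) -> D G (Box a) -> D G (Dia b).
Proof.
  intros Hd Hab Ha; exact (mp3 (Kmc_axiom (Kmc_K2 a b)) (derives_imp_const Hd) Hab Ha).
Qed.

Lemma rule_M3' G a b :
  D G (Or (Dia a) (Dia (Neg a))) -> D G (Dia b) -> D G (Dia (Imp a b)).
Proof.
  intros Hor Hb; exact (mp2 (Kmc_axiom (Kmc_M3 a b)) (circ_of_dia_or_dia_neg Hor) Hb).
Qed.

Lemma rule_M4' G a b : D G (Dia (Neg b)) -> D G (Dia (Neg a)) -> D G (Dia (Imp a b)).
Proof.
  intros Hnb Hna; exact (mp2 (Kmc_axiom (Kmc_M4 a b)) (circ_of_dia_neg Hnb) Hna).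
Qed.

Lemma Km_ax_derivable_in_Kmc G f : Km_ax f -> D G f.
Proof.
  destruct 1 as [a b | a b | a b | a b | a b | a b | a b].
  - exact (derives_imp3 (fun G' => rule_K' G' a b)).
  - exact (derives_imp3 (fun G' => rule_K1' G' a b)).
  - exact (derives_imp3 (fun G' => rule_K2' G' a b)).
  - exact (derives_imp2 (fun G' => rule_M3' G' a b)).
  - exact (derives_imp2 (fun G' => rule_M4' G' a b)).
  - exact (Kmc_axiom (Kmc_I1 a b)).
  - exact (Kmc_axiom (Kmc_I2 a b)).
Qed.

End KmInKmc.

End Hilbert.

Theorem mainTheorem10 : forall (Gamma : For -> Prop) (alpha : For),
  Km_derives Gamma alpha <-> Kmc_derives Gamma alpha.
Proof.
  intros Gamma alpha; split; apply derives_of_derivable_axioms;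
    intros f [Hf | [Hf | Hf]]; try (apply d_ax; red; tauto).
  - apply (Km_ax_derivable_in_Kmc Kmc_axioms); trivial; unfold Kmc_axioms; tauto.
  - apply (Kmc_ax_derivable_in_Km Km_axioms); trivial; unfold Km_axioms; tauto.
Qed.
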